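(* Let $a>0$ and let $x$ be real with $x<a$. Then for every integer $r\ge0$, $$\psi^{(r)}(a-x)-\psi^{(r)}(a)=-\sum_{n=1}^\infty\frac1n\frac{(x)_n}{(a)_n}\,Y_r\!\left(-H_n^{(1)}(a),\,1!\,H_n^{(2)}(a),\dots,(-1)^r(r-1)!\,H_n^{(r)}(a)\right)$$ (for $r=0$ the left side is $\psi(a-x)-\psi(a)$ and $Y_0=1$), where the $j$-th argument of $Y_r$ is $(-1)^j(j-1)!\,H_n^{(j)}(a)$.
   Context: $\psi=\Gamma'/\Gamma$ is the digamma function and $\psi^{(r)}$ its $r$-th derivative. $(y)_n=y(y+1)\cdots(y+n-1)$. $H_n^{(j)}(a)=\sum_{k=0}^{n-1}(k+a)^{-j}$. Complete (exponential) Bell polynomials: $Y_0=1$ and for $r\ge1$, $Y_r(x_1,\dots,x_r)=\sum \frac{r!}{k_1!\cdots k_r!}\prod_{j=1}^r\left(\frac{x_j}{j!}\right)^{k_j}$, the sum over all tuples of nonnegative integers $(k_1,\dots,k_r)$ with $k_1+2k_2+\cdots+rk_r=r$. *)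

From Stdlib Require Import Reals Lra Lia List Arith.
Import ListNotations.
Open Scope R_scope.

(* Gauss/Euler product whose limit defines Gamma(z) for z > 0:
   Gamma(z) = lim_{n->oo} n! n^z / (z (z+1) ... (z+n)). *)
Fixpoint prod_shift (z : R) (n : nat) : R :=
  match n with
  | O => z
  | S m => prod_shift z m * (z + INR (S m))
  end.

Definition gauss_seq (z : R) (n : nat) : R :=
  INR (fact n) * Rpower (INR n) z / prod_shift z n.

Fixpoint poch (y : R) (n : nat) : R :=
  match n with
  | O => 1
  | S m => poch y m * (y + INR m)
  end.

Fixpoint Hsum (n j : nat) (a : R) : R :=
  match n with
  | O => 0
  | S m => Hsum m j a + / (INR m + a) ^ j
  end.

Fixpoint tuples (len b : nat) : list (list nat) :=
  match len with
  | O => [[]]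
  | S m => flat_map (fun k => map (cons k) (tuples m b)) (seq 0 (S b))
  end.

Fixpoint wsum (start : nat) (ks : list nat) : nat :=
  match ks with
  | [] => 0%nat
  | k :: t => (start * k + wsum (S start) t)%nat
  end.

Fixpoint bell_factor (x : nat -> R) (start : nat) (ks : list nat) : R :=
  match ks with
  | [] => 1
  | k :: t => (x start / INR (fact start)) ^ k / INR (fact k)
              * bell_factor x (S start) t
  end.

(* Complete exponential Bell polynomial Y_r(x_1,...,x_r):
   sum over (k_1,...,k_r) with k_1 + 2 k_2 + ... + r k_r = r of
   r!/(k_1!...k_r!) prod_j (x_j/j!)^{k_j}.  (Y_0 = 1.) *)
Definition bellY (r : nat) (x : nat -> R) : R :=
  fold_right Rplus 0
    (map (fun ks => INR (fact r) * bell_factor x 1 ks)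
         (filter (fun ks => Nat.eqb (wsum 1 ks) r) (tuples r r))).

(* For [r = 0] the series is [sum_n (x)_n / (n (a)_n)].  Replacing [a] by [a + 1]
   telescopes: the difference of the two series is [sum_n (x)_n / (a)_(n+1) = 1/(a-x) - 1/a],
   the first term of [psi(a) - psi(a-x) = sum_k (1/(a-x+k) - 1/(a+k))].  Iterating, and
   using that the series at [a + K] is [O(1/K)], gives the case [r = 0]; here [psi] is
   identified with [lim (ln n - sum_(k<=n) 1/(z+k))] by differentiating the Gauss product.

   For [r > 0] one differentiates in [a]: [d/da (1/(a)_n) = -H_n^(1)(a) / (a)_n], the
   [j]-th Bell argument [(-1)^j (j-1)! H_n^(j)(a)] differentiates to the [(j+1)]-th, and
   under this derivation [Y_r] becomes [Y_(r+1) - x_1 Y_r].  So the [r]-th series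
   differentiates termwise to the [(r+1)]-th.  Termwise differentiation is justified by
   the majorant [|(x)_n| / (n (b)_n) Y_r(c) (1 + H_n^(1)(b))^r], which is summable by
   Raabe's test because [(x)_n / (b)_n] decays like [n^(x-b)] while [H_n^(1)] grows
   only logarithmically. *)

From Stdlib Require Import Reals Lra Lia List Arith Psatz Classical ClassicalEpsilon.
Import ListNotations.
Open Scope R_scope.

Definition Rsum_list (l : list R) : R := fold_right Rplus 0 l.

Lemma Rsum_list_app l1 l2 : Rsum_list (l1 ++ l2) = Rsum_list l1 + Rsum_list l2.
Proof. induction l1 as [|y l IH]; simpl; [lra | rewrite IH; lra]. Qed.

Lemma Rsum_list_scal {A} (c : R) (f : A -> R) l :
  Rsum_list (map (fun y => c * f y) l) = c * Rsum_list (map f l).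
Proof. induction l as [|y l IH]; simpl; [lra | rewrite IH; lra]. Qed.

Lemma Rsum_list_flat_map {A B} (f : B -> R) (g : A -> list B) l :
  Rsum_list (map f (flat_map g l)) = Rsum_list (map (fun y => Rsum_list (map f (g y))) l).
Proof. induction l as [|y l IH]; simpl; auto. rewrite map_app, Rsum_list_app, IH; auto. Qed.

Lemma Rsum_list_seq (f : nat -> R) n : Rsum_list (map f (seq 0 (S n))) = sum_f_R0 f n.
Proof.
  induction n as [|n IH]; [simpl; lra|].
  rewrite seq_S, map_app, Rsum_list_app, IH. simpl. rewrite Rplus_0_r. reflexivity.
Qed.

Lemma filter_flat_map {A B} (P : B -> bool) (g : A -> list B) l :
  filter P (flat_map g l) = flat_map (fun y => filter P (g y)) l.
Proof. induction l as [|y l IH]; simpl; auto. rewrite filter_app, IH; auto. Qed.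

Lemma filter_map_cons {A} (P : list A -> bool) k (T : list (list A)) :
  filter P (map (cons k) T) = map (cons k) (filter (fun t => P (k :: t)) T).
Proof. induction T as [|t T IH]; simpl; auto. destruct (P (k :: t)); simpl; rewrite IH; auto. Qed.

Lemma filter_false {A} (P : A -> bool) l : (forall t, P t = false) -> filter P l = [].
Proof. intros H; induction l as [|y l IH]; simpl; auto. rewrite H; auto. Qed.

Lemma sum_f_R0_zero (f : nat -> R) N : (forall k, (k <= N)%nat -> f k = 0) -> sum_f_R0 f N = 0.
Proof.
  intros H; induction N as [|N IH]; simpl; [apply H; lia|].
  rewrite IH, (H (S N)); [lra | lia | intros; apply H; lia].
Qed.

Lemma sum_f_R0_head (f : nat -> R) N :
  (forall k, (1 <= k <= N)%nat -> f k = 0) -> sum_f_R0 f N = f 0%nat.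
Proof.
  intros H; induction N as [|N IH]; simpl; auto.
  rewrite IH, (H (S N)); [lra | lia | intros; apply H; lia].
Qed.

Lemma sum_f_R0_single (g : nat -> R) s N :
  sum_f_R0 (fun j => if Nat.eqb j s then g j else 0) N = if Nat.leb s N then g s else 0.
Proof.
  induction N as [|N IH].
  - destruct s; reflexivity.
  - rewrite tech5, IH.
    destruct (Nat.eqb_spec (S N) s), (Nat.leb_spec s N), (Nat.leb_spec s (S N));
      subst; try lia; lra.
Qed.

Lemma sum_f_R0_swap (F : nat -> nat -> R) N M :
  sum_f_R0 (fun k => sum_f_R0 (fun j => F k j) N) M =
  sum_f_R0 (fun j => sum_f_R0 (fun k => F k j) M) N.
Proof. induction M as [|M IH]; simpl; [reflexivity | rewrite IH, <- sum_plus; reflexivity]. Qed.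

Lemma sum_f_R0_scal_l (f : nat -> R) c N : c * sum_f_R0 f N = sum_f_R0 (fun k => c * f k) N.
Proof. rewrite scal_sum. apply sum_eq; intros; ring. Qed.

(** * Complete Bell polynomials *)

Section PartialBell.

Variable x : nat -> R.

Definition bell_coef (s k : nat) : R := (x s / INR (fact s)) ^ k / INR (fact k).

Definition partial_bell (s len b w : nat) : R :=
  Rsum_list (map (bell_factor x s)
    (filter (fun ks => Nat.eqb (wsum s ks) w) (tuples len b))).

Lemma partial_bell_0 s b w : partial_bell s 0 b w = if Nat.eqb w 0 then 1 else 0.
Proof. unfold partial_bell; simpl. destruct w; simpl; lra. Qed.

Lemma partial_bell_S s len b w : partial_bell s (S len) b w =
  sum_f_R0 (fun k => if Nat.leb (s * k) w
                     then bell_coef s k * partial_bell (S s) len b (w - s * k) else 0) b.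
Proof.
  unfold partial_bell; cbn [tuples].
  rewrite filter_flat_map, Rsum_list_flat_map, <- Rsum_list_seq.
  f_equal. apply map_ext. intro k.
  rewrite filter_map_cons, map_map. simpl.
  rewrite (Rsum_list_scal (bell_coef s k) (bell_factor x (S s))).
  destruct (Nat.leb_spec (s * k) w).
  - do 3 f_equal. apply filter_ext. intro t.
    destruct (Nat.eqb_spec (s * k + wsum (S s) t) w),
      (Nat.eqb_spec (wsum (S s) t) (w - s * k)); auto; lia.
  - rewrite filter_false; [simpl; lra|].
    intro t. apply Nat.eqb_neq. lia.
Qed.

Lemma partial_bell_weight_0 s len b : (1 <= s)%nat -> partial_bell s len b 0 = 1.
Proof.
  revert s; induction len as [|len IH]; intros s Hs.
  - rewrite partial_bell_0; reflexivity.
  - rewrite partial_bell_S, sum_f_R0_head.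
    + rewrite Nat.mul_0_r. simpl. rewrite IH by lia. unfold bell_coef; simpl; lra.
    + intros k Hk. destruct (Nat.leb_spec (s * k) 0); [nia | reflexivity].
Qed.

(* The [k = 0] summand vanishes and [s k (c^k / k!) = s c (c^(k-1) / (k-1)!)]. *)
Lemma partial_bell_first_weight s len b w : (1 <= s <= w)%nat -> (w <= b)%nat ->
  sum_f_R0 (fun k => if Nat.leb (s * k) w
     then bell_coef s k * INR (s * k) * partial_bell (S s) len b (w - s * k) else 0) b =
  INR s * (x s / INR (fact s)) * partial_bell s (S len) b (w - s).
Proof.
  intros Hsw Hb. rewrite partial_bell_S, decomp_sum by lia.
  rewrite Nat.mul_0_r, Rmult_0_r, Rmult_0_l, Rplus_0_l, sum_f_R0_scal_l.
  destruct b as [|b]; [lia|]. simpl pred. rewrite tech5.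
  destruct (Nat.leb_spec (s * S b) (w - s)); [nia|].
  rewrite Rmult_0_r, Rplus_0_r. apply sum_eq; intros i Hi.
  destruct (Nat.leb_spec (s * S i) w), (Nat.leb_spec (s * i) (w - s)); try lia; [|ring].
  replace (w - s * S i)%nat with (w - s - s * i)%nat by lia.
  unfold bell_coef. rewrite fact_simpl, !mult_INR. simpl pow.
  assert (INR (fact i) <> 0) by apply INR_fact_neq_0.
  assert (INR (fact s) <> 0) by apply INR_fact_neq_0.
  assert (INR (S i) <> 0) by (apply not_0_INR; lia).
  field; auto.
Qed.

(* Summing [j k_j] over the tuples of weight [w] gives [w]; the contribution of each
   index [j] is a partial Bell sum of weight [w - j]. *)
Definition euler_sum (B : nat -> R) (lo w N : nat) : R :=
  sum_f_R0 (fun j => if (Nat.leb lo j && Nat.leb j w)%bool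
                     then INR j * (x j / INR (fact j)) * B (w - j)%nat else 0) N.

Lemma euler_sum_split B lo w N : (w <= N)%nat ->
  euler_sum B lo w N =
  (if Nat.leb lo w then INR lo * (x lo / INR (fact lo)) * B (w - lo)%nat else 0)
  + euler_sum B (S lo) w N.
Proof.
  intros HN. unfold euler_sum.
  replace (if Nat.leb lo w then _ else 0) with (if Nat.leb lo N then
    (if Nat.leb lo w then INR lo * (x lo / INR (fact lo)) * B (w - lo)%nat else 0)
    else 0) by (destruct (Nat.leb_spec lo N), (Nat.leb_spec lo w); reflexivity || lia).
  rewrite <- (sum_f_R0_single (fun j => if Nat.leb lo w
      then INR j * (x j / INR (fact j)) * B (w - j)%nat else 0) lo N).
  rewrite <- sum_plus. apply sum_eq; intros j _.
  destruct (Nat.eqb_spec j lo), (Nat.leb_spec lo j), (Nat.leb_spec (S lo) j),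
    (Nat.leb_spec j w), (Nat.leb_spec lo w); subst; simpl; try lia; lra.
Qed.

Lemma partial_bell_rest_weight s len b w N :
  (forall w', (w' <= w)%nat ->
     INR w' * partial_bell (S s) len b w' = euler_sum (partial_bell (S s) len b) (S s) w' N) ->
  sum_f_R0 (fun k => if Nat.leb (s * k) w then bell_coef s k *
     (INR (w - s * k) * partial_bell (S s) len b (w - s * k)) else 0) b =
  euler_sum (partial_bell s (S len) b) (S s) w N.
Proof.
  intros IH. set (B' := partial_bell (S s) len b).
  transitivity (sum_f_R0 (fun k => sum_f_R0 (fun j =>
     if Nat.leb (s * k) w then bell_coef s k *
       (if (Nat.leb (S s) j && Nat.leb j (w - s * k))%bool
        then INR j * (x j / INR (fact j)) * B' (w - s * k - j)%nat else 0)
     else 0) N) b).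
  { apply sum_eq; intros k _. destruct (Nat.leb_spec (s * k) w).
    - unfold B'. rewrite IH by lia. unfold euler_sum. apply sum_f_R0_scal_l.
    - symmetry; apply sum_f_R0_zero; reflexivity. }
  rewrite sum_f_R0_swap. unfold euler_sum. apply sum_eq; intros j _.
  rewrite partial_bell_S. fold B'.
  destruct (Nat.leb_spec (S s) j), (Nat.leb_spec j w); simpl.
  - rewrite sum_f_R0_scal_l. apply sum_eq; intros k _.
    destruct (Nat.leb_spec (s * k) w), (Nat.leb_spec j (w - s * k)),
      (Nat.leb_spec (s * k) (w - j)); simpl; try lia; try ring.
    replace (w - s * k - j)%nat with (w - j - s * k)%nat by lia. ring.
  - apply sum_f_R0_zero; intros k _.
    destruct (Nat.leb_spec (s * k) w), (Nat.leb_spec j (w - s * k)); simpl; try lia; ring.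
  - apply sum_f_R0_zero; intros k _. destruct (Nat.leb (s * k) w); ring.
  - apply sum_f_R0_zero; intros k _. destruct (Nat.leb (s * k) w); ring.
Qed.

Lemma partial_bell_euler b len : forall s w N,
  (1 <= s)%nat -> (w < s + len)%nat -> (w <= b)%nat -> (w <= N)%nat ->
  INR w * partial_bell s len b w = euler_sum (partial_bell s len b) s w N.
Proof.
  induction len as [|len IH]; intros s w N Hs Hw Hb HN.
  - unfold euler_sum. rewrite partial_bell_0, sum_f_R0_zero.
    + destruct w; simpl; ring.
    + intros k _. destruct (Nat.leb_spec s k), (Nat.leb_spec k w); simpl; try lra; lia.
  - rewrite euler_sum_split by lia.
    rewrite <- (partial_bell_rest_weight s len b w N) by (intros; apply IH; lia).
    rewrite partial_bell_S, sum_f_R0_scal_l.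
    transitivity (sum_f_R0 (fun k => if Nat.leb (s * k) w then bell_coef s k * INR (s * k)
        * partial_bell (S s) len b (w - s * k) else 0) b
      + sum_f_R0 (fun k => if Nat.leb (s * k) w then bell_coef s k *
        (INR (w - s * k) * partial_bell (S s) len b (w - s * k)) else 0) b).
    { rewrite <- sum_plus. apply sum_eq; intros k _.
      destruct (Nat.leb_spec (s * k) w) as [Hk|Hk]; [rewrite minus_INR by lia; ring | ring]. }
    f_equal. destruct (Nat.leb_spec s w).
    + apply partial_bell_first_weight; lia.
    + apply sum_f_R0_zero; intros [|k] _; [rewrite Nat.mul_0_r; simpl; ring|].
      destruct (Nat.leb_spec (s * S k) w); [nia | reflexivity].
Qed.

End PartialBell.

Definition binom (n k : nat) : R := if Nat.leb k n then C n k else 0.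

Lemma C_diag n : C n n = 1.
Proof. unfold C. rewrite Nat.sub_diag. simpl. field. apply INR_fact_neq_0. Qed.

Lemma binom_0 n : binom n 0 = 1.
Proof. unfold binom, C. simpl. rewrite Nat.sub_0_r. field. apply INR_fact_neq_0. Qed.

Lemma binom_out n : binom n (S n) = 0.
Proof. unfold binom. destruct (Nat.leb_spec (S n) n); [lia | reflexivity]. Qed.

Lemma binom_pascal n i : binom (S n) (S i) = binom n i + binom n (S i).
Proof.
  unfold binom. destruct (Nat.leb_spec (S i) (S n)), (Nat.leb_spec i n),
    (Nat.leb_spec (S i) n); try lia; [rewrite pascal by lia; reflexivity | | lra].
  replace i with n by lia. rewrite !C_diag. lra.
Qed.

Lemma binom_nonneg n k : 0 <= binom n k.
Proof.
  unfold binom, C. destruct (Nat.leb k n); [|lra].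
  apply Rle_mult_inv_pos; [apply pos_INR|].
  apply Rmult_lt_0_compat; apply INR_fact_lt_0.
Qed.

(* [bell_rec x r] is [Y_r] computed by [Y_(r+1) = sum_k C(r,k) x_(k+1) Y_(r-k)];
   the fuel argument only serves the termination check. *)
Fixpoint bell_fuel (x : nat -> R) (fuel r : nat) : R :=
  match fuel, r with
  | S f, S r' => sum_f_R0 (fun k => binom r' k * x (S k) * bell_fuel x f (r' - k)) r'
  | _, _ => 1
  end.

Definition bell_rec (x : nat -> R) (r : nat) : R := bell_fuel x r r.

Lemma bell_fuel_enough x : forall f1 f2 r, (r <= f1)%nat -> (r <= f2)%nat ->
  bell_fuel x f1 r = bell_fuel x f2 r.
Proof.
  induction f1 as [|f1 IH]; intros [|f2] [|r] H1 H2; simpl; try lia; try reflexivity.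
  apply sum_eq; intros k _. rewrite (IH f2) by lia. reflexivity.
Qed.

Lemma bell_rec_0 x : bell_rec x 0 = 1.
Proof. reflexivity. Qed.

Lemma bell_rec_S x r :
  bell_rec x (S r) = sum_f_R0 (fun k => binom r k * x (S k) * bell_rec x (r - k)) r.
Proof.
  unfold bell_rec at 1. simpl. apply sum_eq; intros k _.
  unfold bell_rec. rewrite (bell_fuel_enough x r (r - k)) by lia. reflexivity.
Qed.

Lemma partial_bell_rec x len b : forall w, (w <= len)%nat -> (w <= b)%nat ->
  INR (fact w) * partial_bell x 1 len b w = bell_rec x w.
Proof.
  intro w. induction w as [[|r] IH] using (well_founded_induction lt_wf); intros Hl Hb.
  - rewrite partial_bell_weight_0 by lia. unfold bell_rec; simpl. ring.
  - replace (INR (fact (S r)) * partial_bell x 1 len b (S r)) with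
      (INR (fact r) * (INR (S r) * partial_bell x 1 len b (S r)))
      by (rewrite fact_simpl, mult_INR; ring).
    rewrite (partial_bell_euler x b len 1 (S r) (S r)) by lia.
    unfold euler_sum. rewrite decomp_sum by lia. simpl pred. rewrite Rplus_0_l.
    rewrite bell_rec_S, sum_f_R0_scal_l. apply sum_eq; intros k Hk.
    destruct (Nat.leb_spec 1 (S k)), (Nat.leb_spec (S k) (S r)); try lia. cbn [andb].
    rewrite <- (IH (r - k)%nat) by lia.
    replace (S r - S k)%nat with (r - k)%nat by lia.
    unfold binom. destruct (Nat.leb_spec k r); [|lia]. unfold C.
    rewrite fact_simpl, mult_INR.
    assert (INR (fact k) <> 0) by apply INR_fact_neq_0.
    assert (INR (fact (r - k)) <> 0) by apply INR_fact_neq_0.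
    assert (INR (S k) <> 0) by (apply not_0_INR; lia).
    field; auto.
Qed.

Lemma bellY_rec r x : bellY r x = bell_rec x r.
Proof.
  unfold bellY. rewrite (Rsum_list_scal (INR (fact r)) (bell_factor x 1)).
  apply partial_bell_rec; lia.
Qed.

(* The derivation [D x_j = x_(j+1)] acts on Bell polynomials by [D Y_r = Y_(r+1) - x_1 Y_r]. *)
Lemma bell_rec_derivation x r :
  bell_rec x (S (S r)) - x 1%nat * bell_rec x (S r) =
  sum_f_R0 (fun k => binom r k * (x (S (S k)) * bell_rec x (r - k) +
     x (S k) * (bell_rec x (S (r - k)) - x 1%nat * bell_rec x (r - k)))) r.
Proof.
  assert (Hshift : sum_f_R0 (fun k => binom r k * x (S k) * bell_rec x (S (r - k))) r =
      x 1%nat * bell_rec x (S r) +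
      sum_f_R0 (fun i => binom r (S i) * x (S (S i)) * bell_rec x (r - i)) r).
  { transitivity (sum_f_R0 (fun k => binom r k * x (S k) * bell_rec x (S (r - k))) (S r)).
    { rewrite tech5, binom_out. ring. }
    rewrite decomp_sum by lia. simpl pred. rewrite binom_0, Nat.sub_0_r.
    f_equal; [ring|]. apply sum_eq; intros i Hi. destruct (Nat.eq_dec i r).
    - subst. rewrite binom_out. ring.
    - replace (S (r - S i)) with (r - i)%nat by lia. reflexivity. }
  assert (Hpascal : bell_rec x (S (S r)) = x 1%nat * bell_rec x (S r) +
      sum_f_R0 (fun i => binom r i * x (S (S i)) * bell_rec x (r - i)) r +
      sum_f_R0 (fun i => binom r (S i) * x (S (S i)) * bell_rec x (r - i)) r).
  { rewrite bell_rec_S, decomp_sum by lia. simpl pred.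
    rewrite binom_0, Nat.sub_0_r, Rplus_assoc, <- sum_plus. f_equal; [ring|].
    apply sum_eq; intros i _. rewrite binom_pascal.
    replace (S r - S i)%nat with (r - i)%nat by lia. ring. }
  transitivity (sum_f_R0 (fun k => binom r k * x (S (S k)) * bell_rec x (r - k)) r +
      sum_f_R0 (fun k => binom r k * x (S k) * bell_rec x (S (r - k))) r -
      x 1%nat * sum_f_R0 (fun k => binom r k * x (S k) * bell_rec x (r - k)) r).
  { rewrite <- bell_rec_S, Hshift, Hpascal. ring. }
  rewrite sum_f_R0_scal_l, <- sum_plus, <- minus_sum. apply sum_eq; intros; ring.
Qed.

Lemma bell_rec_nonneg c : (forall j, 0 <= c j) -> forall r, 0 <= bell_rec c r.
Proof.
  intros Hc r. induction r as [[|r] IH] using (well_founded_induction lt_wf).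
  - rewrite bell_rec_0; lra.
  - rewrite bell_rec_S. apply cond_pos_sum. intro k.
    apply Rmult_le_pos; [apply Rmult_le_pos; [apply binom_nonneg | apply Hc]|].
    destruct (le_lt_dec k r); [apply IH; lia|].
    replace (r - k)%nat with 0%nat by lia. rewrite bell_rec_0; lra.
Qed.

(* [Y_r] has nonnegative coefficients and is homogeneous of degree [r] for the
   weight [deg x_j = j], so [|x_j| <= c_j M] gives [|Y_r(x)| <= Y_r(c) M^r] when [M >= 1]. *)
Lemma bell_rec_bound v c M : (forall j, (1 <= j)%nat -> Rabs (v j) <= c j * M) ->
  (forall j, 0 <= c j) -> 1 <= M -> forall r, Rabs (bell_rec v r) <= bell_rec c r * M ^ r.
Proof.
  intros Hv Hc HM r. induction r as [[|r] IH] using (well_founded_induction lt_wf).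
  - rewrite !bell_rec_0, Rabs_R1. simpl. lra.
  - rewrite !bell_rec_S, (Rmult_comm _ (M ^ S r)), sum_f_R0_scal_l.
    eapply Rle_trans; [apply Rsum_abs|]. apply sum_Rle. intros k Hk.
    rewrite !Rabs_mult, (Rabs_pos_eq (binom r k)) by apply binom_nonneg.
    assert (H1 := Hv (S k) ltac:(lia)).
    assert (H2 := IH (r - k)%nat ltac:(lia)).
    assert (H3 : M * M ^ (r - k) <= M ^ S r) by (apply (Rle_pow M (S (r - k))); lia || lra).
    assert (0 <= binom r k) by apply binom_nonneg.
    assert (0 <= bell_rec c (r - k)) by (apply bell_rec_nonneg; auto).
    assert (0 <= c (S k)) by auto.
    assert (0 <= M ^ (r - k)) by (apply pow_le; lra).
    apply Rle_trans with (binom r k * (c (S k) * M) * (bell_rec c (r - k) * M ^ (r - k))).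
    + apply Rmult_le_compat; try (apply Rmult_le_pos; auto); try apply Rabs_pos; auto.
      apply Rmult_le_compat_l; auto.
    + replace (binom r k * (c (S k) * M) * (bell_rec c (r - k) * M ^ (r - k))) with
        ((binom r k * c (S k) * bell_rec c (r - k)) * (M * M ^ (r - k))) by ring.
      rewrite (Rmult_comm (M ^ S r)).
      apply Rmult_le_compat_l; auto. apply Rmult_le_pos; auto. apply Rmult_le_pos; auto.
Qed.

Lemma derivable_pt_lim_value f a l1 l2 :
  l1 = l2 -> derivable_pt_lim f a l1 -> derivable_pt_lim f a l2.
Proof. intros ->; auto. Qed.

Lemma derivable_pt_lim_local f g a l d : 0 < d ->
  (forall y, Rabs (y - a) < d -> f y = g y) ->
  derivable_pt_lim f a l -> derivable_pt_lim g a l.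
Proof.
  intros Hd Heq H eps He. destruct (H eps He) as [del Hdel].
  assert (Hm : 0 < Rmin del d) by (apply Rmin_glb_lt; [apply cond_pos | auto]).
  exists (mkposreal _ Hm). intros h Hh Hlt. simpl in Hlt.
  assert (Rabs h < del) by (eapply Rlt_le_trans; [exact Hlt | apply Rmin_l]).
  assert (Rabs h < d) by (eapply Rlt_le_trans; [exact Hlt | apply Rmin_r]).
  rewrite <- (Heq (a + h)), <- (Heq a); [apply Hdel; auto | |].
  - rewrite Rminus_diag, Rabs_R0; auto.
  - replace (a + h - a) with h by ring. auto.
Qed.

Lemma derivable_pt_lim_ext f g a l : (forall y, f y = g y) ->
  derivable_pt_lim f a l -> derivable_pt_lim g a l.
Proof. intros H. apply (derivable_pt_lim_local f g a l 1); auto; lra. Qed.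

Lemma derivable_pt_lim_plus' f g a lf lg : derivable_pt_lim f a lf ->
  derivable_pt_lim g a lg -> derivable_pt_lim (fun y => f y + g y) a (lf + lg).
Proof. apply derivable_pt_lim_plus. Qed.

Lemma derivable_pt_lim_minus' f g a lf lg : derivable_pt_lim f a lf ->
  derivable_pt_lim g a lg -> derivable_pt_lim (fun y => f y - g y) a (lf - lg).
Proof. apply derivable_pt_lim_minus. Qed.

Lemma derivable_pt_lim_mult' f g a lf lg : derivable_pt_lim f a lf ->
  derivable_pt_lim g a lg -> derivable_pt_lim (fun y => f y * g y) a (lf * g a + f a * lg).
Proof. apply derivable_pt_lim_mult. Qed.

Lemma derivable_pt_lim_scal' c g a lg : derivable_pt_lim g a lg ->
  derivable_pt_lim (fun y => c * g y) a (c * lg).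
Proof.
  intros H. apply (derivable_pt_lim_value _ _ (0 * g a + c * lg)); [ring|].
  apply derivable_pt_lim_mult'; [apply derivable_pt_lim_const | auto].
Qed.

Lemma derivable_pt_lim_comp' f g a lf lg : derivable_pt_lim f a lf ->
  derivable_pt_lim g (f a) lg -> derivable_pt_lim (fun y => g (f y)) a (lg * lf).
Proof. apply derivable_pt_lim_comp. Qed.

Lemma derivable_pt_lim_shift c a : derivable_pt_lim (fun y => y + c) a 1.
Proof.
  apply (derivable_pt_lim_value _ _ (1 + 0)); [ring|].
  apply derivable_pt_lim_plus'; [apply derivable_pt_lim_id | apply derivable_pt_lim_const].
Qed.

Lemma derivable_pt_lim_inv' f a l : derivable_pt_lim f a l -> f a <> 0 ->
  derivable_pt_lim (fun y => / f y) a (- l / f a ^ 2).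
Proof.
  intros H Hf.
  apply (derivable_pt_lim_ext (fun y => 1 / f y)); [intro; unfold Rdiv; ring|].
  apply (derivable_pt_lim_value _ _ ((0 * f a - l * 1) / Rsqr (f a))).
  { unfold Rsqr; simpl; field; auto. }
  apply (derivable_pt_lim_div (fun _ => 1) f); auto. apply derivable_pt_lim_const.
Qed.

Lemma derivable_pt_lim_sum (F : nat -> R -> R) dF a n :
  (forall k, (k <= n)%nat -> derivable_pt_lim (F k) a (dF k)) ->
  derivable_pt_lim (fun y => sum_f_R0 (fun k => F k y) n) a (sum_f_R0 dF n).
Proof.
  induction n as [|n IH]; intros H; simpl.
  - apply H; lia.
  - apply derivable_pt_lim_plus'; [apply IH; intros; apply H | apply H]; lia.
Qed.

Lemma bell_rec_deriv (v : R -> nat -> R) a :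
  (forall j, (1 <= j)%nat -> derivable_pt_lim (fun y => v y j) a (v a (S j))) ->
  forall r, derivable_pt_lim (fun y => bell_rec (v y) r) a
    (bell_rec (v a) (S r) - v a 1%nat * bell_rec (v a) r).
Proof.
  intros Hv r. induction r as [[|r] IH] using (well_founded_induction lt_wf).
  - apply (derivable_pt_lim_value _ _ 0).
    { rewrite bell_rec_S. simpl. rewrite binom_0, !bell_rec_0. ring. }
    apply derivable_pt_lim_const.
  - apply (derivable_pt_lim_ext
      (fun y => sum_f_R0 (fun k => binom r k * v y (S k) * bell_rec (v y) (r - k)) r)).
    { intro; rewrite bell_rec_S; reflexivity. }
    rewrite bell_rec_derivation.
    apply (derivable_pt_lim_sum (fun k y => binom r k * v y (S k) * bell_rec (v y) (r - k))).
    intros k Hk.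
    apply (derivable_pt_lim_value _ _ (binom r k * v a (S (S k)) * bell_rec (v a) (r - k) +
      binom r k * v a (S k) * (bell_rec (v a) (S (r - k)) - v a 1%nat * bell_rec (v a) (r - k))));
      [ring|].
    apply (derivable_pt_lim_mult' (fun y => binom r k * v y (S k))).
    + apply derivable_pt_lim_scal', Hv; lia.
    + apply IH; lia.
Qed.

Lemma poch_S y n : poch y (S n) = poch y n * (y + INR n).
Proof. reflexivity. Qed.

Lemma Hsum_S n j a : Hsum (S n) j a = Hsum n j a + / (INR n + a) ^ j.
Proof. reflexivity. Qed.

Lemma poch_pos a n : 0 < a -> 0 < poch a n.
Proof.
  intros Ha; induction n as [|n IH]; simpl; [lra|].
  apply Rmult_lt_0_compat; auto. pose proof (pos_INR n); lra.
Qed.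

Lemma poch_le b a n : 0 < b <= a -> poch b n <= poch a n.
Proof.
  intros H; induction n as [|n IH]; simpl; [lra|].
  pose proof (pos_INR n). pose proof (poch_pos b n ltac:(lra)).
  apply Rmult_le_compat; lra.
Qed.

Lemma Hsum_nonneg n j a : 0 < a -> 0 <= Hsum n j a.
Proof.
  intros Ha; induction n as [|n IH]; simpl; [lra|].
  assert (0 < INR n + a) by (pose proof (pos_INR n); lra).
  assert (0 < / (INR n + a) ^ j) by (apply Rinv_0_lt_compat, pow_lt; auto). lra.
Qed.

Lemma Hsum_le n m j a : 0 < a -> (n <= m)%nat -> Hsum n j a <= Hsum m j a.
Proof.
  intros Ha H; induction H as [|m H IH]; simpl; [lra|].
  assert (0 < INR m + a) by (pose proof (pos_INR m); lra).
  assert (0 < / (INR m + a) ^ j) by (apply Rinv_0_lt_compat, pow_lt; auto). lra.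
Qed.

Lemma Hsum_deriv n j a : 0 < a ->
  derivable_pt_lim (fun y => Hsum n j y) a (- INR j * Hsum n (S j) a).
Proof.
  intros Ha. induction n as [|n IH]; cbn [Hsum].
  - apply (derivable_pt_lim_value _ _ 0); [ring | apply derivable_pt_lim_const].
  - apply (derivable_pt_lim_value _ _
      (- INR j * Hsum n (S j) a + - INR j * / (INR n + a) ^ S j)); [ring|].
    apply derivable_pt_lim_plus'; auto.
    assert (Hna : 0 < INR n + a) by (pose proof (pos_INR n); lra).
    apply (derivable_pt_lim_ext (fun y => / (y + INR n) ^ j)); [intro; rewrite Rplus_comm; auto|].
    apply (derivable_pt_lim_value _ _ (- (INR j * (a + INR n) ^ pred j * 1) / ((a + INR n) ^ j) ^ 2)).
    { rewrite (Rplus_comm a). assert (INR n + a <> 0) by lra.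
      destruct j; simpl; field; [auto | split; [apply pow_nonzero|]; auto]. }
    apply (derivable_pt_lim_inv' (fun y => (y + INR n) ^ j)); [|apply pow_nonzero; lra].
    apply (derivable_pt_lim_comp' (fun y => y + INR n) (fun y => y ^ j)).
    + apply derivable_pt_lim_shift.
    + apply derivable_pt_lim_pow.
Qed.

Lemma inv_poch_deriv n a : 0 < a ->
  derivable_pt_lim (fun y => / poch y n) a (- Hsum n 1 a / poch a n).
Proof.
  intros Ha. induction n as [|n IH].
  - apply (derivable_pt_lim_value _ _ 0); [simpl; field|].
    apply (derivable_pt_lim_ext (fun _ => / 1)); [reflexivity | apply derivable_pt_lim_const].
  - assert (0 < poch a n) by (apply poch_pos; auto).
    assert (0 < a + INR n) by (pose proof (pos_INR n); lra).
    apply (derivable_pt_lim_ext (fun y => / poch y n * / (y + INR n))).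
    { intro y. simpl. destruct (Req_dec (poch y n) 0) as [E|E].
      - rewrite E, Rmult_0_l, Rinv_0. ring.
      - destruct (Req_dec (y + INR n) 0) as [E2|E2].
        + rewrite E2, Rmult_0_r, !Rinv_0. ring.
        + rewrite Rinv_mult. reflexivity. }
    apply (derivable_pt_lim_value _ _ ((- Hsum n 1 a / poch a n) * / (a + INR n)
       + / poch a n * (- 1 / (a + INR n) ^ 2))).
    { simpl. field. split; lra. }
    apply (derivable_pt_lim_mult' (fun y => / poch y n) (fun y => / (y + INR n))); auto.
    apply (derivable_pt_lim_inv' (fun y => y + INR n)); [apply derivable_pt_lim_shift | lra].
Qed.

Definition harmonic_args (n : nat) (a : R) (j : nat) : R :=
  (-1) ^ j * INR (fact (j - 1)) * Hsum n j a.

Lemma harmonic_args_deriv n a j : 0 < a -> (1 <= j)%nat ->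
  derivable_pt_lim (fun y => harmonic_args n y j) a (harmonic_args n a (S j)).
Proof.
  intros Ha Hj. unfold harmonic_args.
  apply (derivable_pt_lim_value _ _
    ((-1) ^ j * INR (fact (j - 1)) * (- INR j * Hsum n (S j) a))).
  { destruct j as [|j]; [lia|]. replace (S (S j) - 1)%nat with (S j) by lia.
    replace (S j - 1)%nat with j by lia. rewrite fact_simpl, mult_INR. simpl pow. ring. }
  apply derivable_pt_lim_scal', Hsum_deriv; auto.
Qed.

Definition psi_term (r : nat) (x a : R) (m : nat) : R :=
  / INR (S m) * (poch x (S m) / poch a (S m)) *
  bellY r (fun j => (-1) ^ j * INR (fact (j - 1)) * Hsum (S m) j a).

Lemma psi_term_bell_rec r x a m : psi_term r x a m =
  / INR (S m) * poch x (S m) * / poch a (S m) * bell_rec (harmonic_args (S m) a) r.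
Proof. unfold psi_term. rewrite bellY_rec. unfold harmonic_args, Rdiv. ring. Qed.

Lemma psi_term_0 x a m : psi_term 0 x a m = / INR (S m) * (poch x (S m) / poch a (S m)).
Proof. rewrite psi_term_bell_rec, bell_rec_0. unfold Rdiv. ring. Qed.

(* The factor [1/(a)_n] contributes [-H_n^(1)(a) = harmonic_args n a 1], which the
   derivation of the Bell polynomial absorbs. *)
Lemma psi_term_deriv r x m a : 0 < a ->
  derivable_pt_lim (fun y => psi_term r x y m) a (psi_term (S r) x a m).
Proof.
  intros Ha. set (c := / INR (S m) * poch x (S m)). set (Y := bell_rec (harmonic_args (S m) a)).
  apply (derivable_pt_lim_ext
    (fun y => c * (/ poch y (S m) * bell_rec (harmonic_args (S m) y) r))).
  { intro; rewrite psi_term_bell_rec; unfold c; ring. }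
  rewrite psi_term_bell_rec. fold Y.
  apply (derivable_pt_lim_value _ _ (c * ((- Hsum (S m) 1 a / poch a (S m)) * Y r
     + / poch a (S m) * (Y (S r) - harmonic_args (S m) a 1%nat * Y r)))).
  { unfold c, harmonic_args. simpl pow. simpl fact. simpl INR. unfold Rdiv. ring. }
  apply derivable_pt_lim_scal'.
  apply (derivable_pt_lim_mult' (fun y => / poch y (S m))
    (fun y => bell_rec (harmonic_args (S m) y) r)); [apply inv_poch_deriv; auto|].
  apply (bell_rec_deriv (fun y => harmonic_args (S m) y)).
  intros j Hj. apply harmonic_args_deriv; auto.
Qed.

(** * A summable majorant *)

Lemma Hsum_le_scaled n j a b : 0 < b <= a -> (1 <= j)%nat ->
  Hsum n j a <= Hsum n 1 b / b ^ (j - 1).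
Proof.
  intros Hb Hj. assert (0 < b ^ (j - 1)) by (apply pow_lt; lra).
  induction n as [|n IH]; simpl; unfold Rdiv in *; [lra|].
  rewrite Rmult_plus_distr_r. apply Rplus_le_compat; [exact IH|].
  pose proof (pos_INR n).
  rewrite <- Rinv_mult. apply Rinv_le_contravar; [apply Rmult_lt_0_compat; lra|].
  destruct j as [|j]; [lia|]. simpl. rewrite Nat.sub_0_r, Rmult_1_r.
  assert (0 < b ^ j) by (apply pow_lt; lra).
  apply Rmult_le_compat; try lra. apply pow_incr; lra.
Qed.

Definition harmonic_weight (b : R) (j : nat) : R := INR (fact (j - 1)) / b ^ (j - 1).

Lemma harmonic_weight_nonneg b j : 0 < b -> 0 <= harmonic_weight b j.
Proof. intros; apply Rle_mult_inv_pos; [apply pos_INR | apply pow_lt; auto]. Qed.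

Lemma harmonic_args_bound n a b j : 0 < b <= a -> (1 <= j)%nat ->
  Rabs (harmonic_args n a j) <= harmonic_weight b j * (1 + Hsum n 1 b).
Proof.
  intros Hb Hj. unfold harmonic_args, harmonic_weight.
  rewrite !Rabs_mult, pow_1_abs, Rabs_pos_eq by apply pos_INR.
  rewrite Rabs_pos_eq by (apply Hsum_nonneg; lra).
  assert (H := Hsum_le_scaled n j a b Hb Hj).
  assert (0 < / b ^ (j - 1)) by (apply Rinv_0_lt_compat, pow_lt; lra).
  assert (0 <= Hsum n 1 b) by (apply Hsum_nonneg; lra).
  assert (0 <= INR (fact (j - 1))) by apply pos_INR.
  unfold Rdiv in *. rewrite Rmult_1_l. nra.
Qed.

Definition psi_majorant (r : nat) (x b : R) (m : nat) : R :=
  / INR (S m) * (Rabs (poch x (S m)) / poch b (S m)) *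
  (bell_rec (harmonic_weight b) r * (1 + Hsum (S m) 1 b) ^ r).

Lemma psi_majorant_nonneg r x b m : 0 < b -> 0 <= psi_majorant r x b m.
Proof.
  intros Hb. unfold psi_majorant.
  assert (0 < poch b (S m)) by (apply poch_pos; auto).
  assert (0 < INR (S m)) by (apply lt_0_INR; lia).
  pose proof (Hsum_nonneg (S m) 1 b Hb).
  repeat apply Rmult_le_pos.
  - left; apply Rinv_0_lt_compat; auto.
  - apply Rabs_pos.
  - left; apply Rinv_0_lt_compat; auto.
  - apply bell_rec_nonneg. intro; apply harmonic_weight_nonneg; auto.
  - apply pow_le; lra.
Qed.

Lemma psi_term_bound r x a b m : 0 < b <= a -> Rabs (psi_term r x a m) <= psi_majorant r x b m.
Proof.
  intros Hb. rewrite psi_term_bell_rec. unfold psi_majorant.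
  assert (HY := bell_rec_bound (harmonic_args (S m) a) (harmonic_weight b)
     (1 + Hsum (S m) 1 b) (fun j Hj => harmonic_args_bound (S m) a b j Hb Hj)
     (fun j => harmonic_weight_nonneg b j ltac:(lra))
     ltac:(pose proof (Hsum_nonneg (S m) 1 b ltac:(lra)); lra) r).
  assert (0 < poch b (S m)) by (apply poch_pos; lra).
  assert (Hpm := poch_le b a (S m) Hb).
  assert (0 < INR (S m)) by (apply lt_0_INR; lia).
  rewrite !Rabs_mult, Rabs_inv, Rabs_pos_eq by lra.
  rewrite (Rabs_inv (poch a (S m))), (Rabs_pos_eq (poch a (S m))) by lra.
  unfold Rdiv. rewrite !Rmult_assoc.
  apply Rmult_le_compat_l; [left; apply Rinv_0_lt_compat; lra|].
  apply Rmult_le_compat_l; [apply Rabs_pos|].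
  apply Rmult_le_compat; auto; [left; apply Rinv_0_lt_compat; lra | apply Rabs_pos |].
  apply Rinv_le_contravar; lra.
Qed.

Lemma ln_1_plus_le w : -1 < w -> ln (1 + w) <= w.
Proof.
  intros Hw. rewrite <- (ln_exp w) at 2.
  destruct (Rle_lt_or_eq_dec _ _ (exp_ineq1_le w)) as [H|H].
  - left; apply ln_increasing; lra.
  - rewrite H; lra.
Qed.

Lemma ln_1_plus_ge y : 0 <= y -> y / (1 + y) <= ln (1 + y).
Proof.
  intros Hy.
  replace (ln (1 + y)) with (- ln (1 + - (y / (1 + y)))).
  - assert (y / (1 + y) < 1) by (apply (Rmult_lt_reg_r (1 + y)); [lra|];
      unfold Rdiv; rewrite Rmult_assoc, Rinv_l; lra).
    pose proof (ln_1_plus_le (- (y / (1 + y))) ltac:(lra)). lra.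
  - replace (1 + - (y / (1 + y))) with (/ (1 + y)) by (field; lra).
    rewrite ln_Rinv by lra. ring.
Qed.

Lemma ln_le_Hsum n b : 0 < b -> ln (INR n + b) - ln b <= Hsum n 1 b.
Proof.
  intros Hb. induction n as [|n IH]; [simpl; rewrite Rplus_0_l; lra|].
  rewrite Hsum_S. pose proof (pos_INR n).
  assert (0 < / (INR n + b)) by (apply Rinv_0_lt_compat; lra).
  replace (ln (INR (S n) + b)) with (ln (INR n + b) + ln (1 + / (INR n + b))).
  - pose proof (ln_1_plus_le (/ (INR n + b)) ltac:(lra)). rewrite pow_1. lra.
  - rewrite <- ln_mult by lra. f_equal. rewrite S_INR. field. lra.
Qed.

Lemma Hsum_unbounded b K : 0 < b -> exists N, forall n, (N <= n)%nat -> K <= Hsum n 1 b.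
Proof.
  intros Hb. destruct (INR_unbounded (exp (K + ln b))) as [N HN].
  exists N. intros n Hn. eapply Rle_trans; [|apply ln_le_Hsum; auto].
  apply (le_INR N n) in Hn.
  assert (K + ln b < ln (INR n + b)).
  { rewrite <- (ln_exp (K + ln b)). apply ln_increasing; [apply exp_pos | lra]. }
  lra.
Qed.

Section Raabe.

Variables (w c : nat -> R) (beta : R) (N0 : nat).
Hypotheses (Hbeta : 0 < beta) (Hw : forall n, 0 <= w n) (Hc : forall n, 0 <= c n)
  (Hratio : forall n, (N0 <= n)%nat -> c (S n) * w (S n) <= (c n - beta) * w n).

Lemma raabe_tail_bound k :
  beta * sum_f_R0 (fun i => w (N0 + i)%nat) k + c (N0 + S k)%nat * w (N0 + S k)%nat
  <= c N0 * w N0.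
Proof.
  induction k as [|k IH].
  - simpl. rewrite Nat.add_0_r, Nat.add_1_r. specialize (Hratio N0 (le_n _)). lra.
  - simpl sum_f_R0. specialize (Hratio (N0 + S k)%nat ltac:(lia)).
    replace (N0 + S (S k))%nat with (S (N0 + S k)) by lia. lra.
Qed.

Lemma raabe_partial_bound n : sum_f_R0 w n <= sum_f_R0 w N0 + c N0 * w N0 / beta.
Proof.
  assert (0 <= c N0 * w N0 / beta) by (apply Rle_mult_inv_pos; [apply Rmult_le_pos|]; auto).
  destruct (le_lt_dec n N0) as [Hn|Hn].
  - enough (sum_f_R0 w n <= sum_f_R0 w N0) by lra.
    replace N0 with (n + (N0 - n))%nat by lia. generalize (N0 - n)%nat. intro k.
    induction k as [|k IH]; [rewrite Nat.add_0_r; lra|].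
    rewrite <- plus_n_Sm, tech5. specialize (Hw (S (n + k))). lra.
  - replace n with (N0 + (n - N0))%nat by lia.
    assert (HT := raabe_tail_bound (n - N0)).
    assert (0 <= c (N0 + S (n - N0))%nat * w (N0 + S (n - N0))%nat)
      by (apply Rmult_le_pos; auto).
    assert (Hsplit : sum_f_R0 w (N0 + (n - N0)) + w N0
      = sum_f_R0 w N0 + sum_f_R0 (fun i => w (N0 + i)%nat) (n - N0)).
    { generalize (n - N0)%nat. intro k. induction k as [|k IH].
      - simpl. rewrite Nat.add_0_r. ring.
      - replace (N0 + S k)%nat with (S (N0 + k)) by lia. rewrite !tech5.
        replace (N0 + S k)%nat with (S (N0 + k)) by lia. lra. }
    assert (sum_f_R0 (fun i => w (N0 + i)%nat) (n - N0) <= c N0 * w N0 / beta).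
    { apply (Rmult_le_reg_l beta); auto.
      replace (beta * (c N0 * w N0 / beta)) with (c N0 * w N0) by (field; lra). lra. }
    specialize (Hw N0). lra.
Qed.

Lemma raabe_summable : { l | Un_cv (fun N => sum_f_R0 w N) l }.
Proof.
  apply growing_cv.
  - intro n. simpl. specialize (Hw (S n)). lra.
  - exists (sum_f_R0 w N0 + c N0 * w N0 / beta). intros y [n ->]. apply raabe_partial_bound.
Qed.

End Raabe.

Lemma pow_1_plus_mul_le y r : 0 <= y -> (1 + y) ^ r * (1 - INR r * y) <= 1.
Proof.
  intros Hy. induction r as [|r IH]; [simpl; lra|].
  rewrite S_INR. simpl pow.
  assert (0 <= (1 + y) ^ r) by (apply pow_le; lra).
  pose proof (pos_INR r).
  assert ((1 + y) * (1 - (INR r + 1) * y) <= 1 - INR r * y) by nra.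
  nra.
Qed.

(* One Raabe step for the majorant at index [t = m+1]: the ratio of consecutive terms is
   [(1 - tau)(1 + y)^r] with [tau = (b-x)/(b+t)] and [y = 1/((t+b) M)], and [r y <= tau/2]
   once the harmonic sum [M] is large. *)
Lemma raabe_ratio_ineq (x b t M P K : R) r : 0 < b -> x < b -> b <= t -> 0 <= x + t ->
  1 <= M -> 2 * INR r <= (b - x) * M -> 0 <= P -> 0 <= K ->
  P * (Rabs (x + t) / (b + t)) * K * (M + / (t + b)) ^ r <=
  (1 - ((b - x) / 4) / t) * (P * K * M ^ r).
Proof.
  intros Hb Hx Ht Hxt HM Hr HP HK.
  rewrite Rabs_pos_eq by lra.
  set (tau := (b - x) / (b + t)).
  set (y := / ((t + b) * M)).
  assert (Htau0 : 0 < tau) by (unfold tau; apply Rdiv_lt_0_compat; lra).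
  assert (E1 : (x + t) / (b + t) = 1 - tau) by (unfold tau; field; lra).
  assert (Hy0 : 0 <= y) by (unfold y; left; apply Rinv_0_lt_compat; nra).
  assert (E2 : M + / (t + b) = M * (1 + y)) by (unfold y; field; split; lra).
  assert (Hry : INR r * y <= tau / 2).
  { unfold y, tau. apply Rmult_le_reg_r with (2 * ((t + b) * M)); [nra|].
    replace (INR r * / ((t + b) * M) * (2 * ((t + b) * M))) with (2 * INR r)
      by (field; split; lra).
    replace ((b - x) / (b + t) / 2 * (2 * ((t + b) * M))) with ((b - x) * M) by (field; lra).
    lra. }
  set (Q := (1 + y) ^ r).
  assert (HQ0 : 0 <= Q) by (apply pow_le; lra).
  assert (HQ1 : Q * (1 - INR r * y) <= 1) by apply pow_1_plus_mul_le, Hy0.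
  assert (Htau1 : tau <= 1) by (unfold tau; apply (Rmult_le_reg_r (b + t)); [lra|];
      unfold Rdiv; rewrite Rmult_assoc, Rinv_l; lra).
  assert (HQ2 : (1 - tau) * Q <= 1 - tau / 2).
  { assert (Q * (1 - tau / 2) <= 1) by nra.
    apply Rmult_le_reg_r with (1 - tau / 2); nra. }
  assert (HQ3 : (1 - tau) * Q <= 1 - ((b - x) / 4) / t).
  { assert (tau / 2 - (b - x) / 4 / t = (b - x) * (t - b) / (4 * t * (b + t)))
      by (unfold tau; field; lra).
    assert (0 <= (b - x) * (t - b) / (4 * t * (b + t))) by (apply Rle_mult_inv_pos; nra).
    lra. }
  rewrite E1, E2, Rpow_mult_distr. fold Q.
  assert (0 <= P * K * M ^ r) by (apply Rmult_le_pos; [apply Rmult_le_pos | apply pow_le]; lra).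
  replace (P * (1 - tau) * K * (M ^ r * Q)) with (((1 - tau) * Q) * (P * K * M ^ r)) by ring.
  apply Rmult_le_compat_r; auto.
Qed.

Lemma psi_majorant_ratio r x b m : 0 < b -> x < b ->
  b + Rabs x <= INR (S m) -> 2 * INR r / (b - x) <= Hsum (S m) 1 b ->
  INR (S (S m)) * psi_majorant r x b (S m) <=
  (INR (S m) - (b - x) / 4) * psi_majorant r x b m.
Proof.
  intros Hb Hx Hm HH.
  set (t := INR (S m)). set (M := 1 + Hsum (S m) 1 b).
  set (P := Rabs (poch x (S m)) / poch b (S m)). set (K := bell_rec (harmonic_weight b) r).
  assert (Hpb : 0 < poch b (S m)) by (apply poch_pos; auto).
  assert (Ht0 : 0 < t) by (apply lt_0_INR; lia).
  pose proof (Rle_abs x). pose proof (Rle_abs (- x)). rewrite Rabs_Ropp in *.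
  replace (INR (S (S m)) * psi_majorant r x b (S m))
    with (P * (Rabs (x + t) / (b + t)) * K * (M + / (t + b)) ^ r).
  2:{ unfold psi_majorant, P, K, M, t.
      rewrite (poch_S x (S m)), (poch_S b (S m)), (Hsum_S (S m)), Rabs_mult, pow_1.
      assert (0 < INR (S (S m))) by (apply lt_0_INR; lia).
      rewrite (S_INR (S m)), (Rplus_comm (INR (S m)) b), (Rplus_assoc 1).
      field. repeat split; lra. }
  replace ((t - (b - x) / 4) * psi_majorant r x b m) with
    ((1 - ((b - x) / 4) / t) * (P * K * M ^ r))
    by (unfold psi_majorant, P, K, M, t; field; split; lra).
  apply raabe_ratio_ineq; unfold t; try lra.
  - unfold M. pose proof (Hsum_nonneg (S m) 1 b Hb). lra.
  - unfold M. apply (Rmult_le_compat_r (b - x)) in HH; [|lra].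
    unfold Rdiv in HH. rewrite Rmult_assoc, Rinv_l, Rmult_1_r in HH; nra.
  - apply Rle_mult_inv_pos; [apply Rabs_pos | auto].
  - apply bell_rec_nonneg. intro; apply harmonic_weight_nonneg; auto.
Qed.

Lemma psi_majorant_summable r x b : 0 < b -> x < b ->
  exists l, Un_cv (fun N => sum_f_R0 (psi_majorant r x b) N) l.
Proof.
  intros Hb Hx.
  destruct (Hsum_unbounded b (2 * INR r / (b - x)) Hb) as [N1 HN1].
  destruct (INR_unbounded (b + Rabs x)) as [N2 HN2].
  destruct (raabe_summable (psi_majorant r x b) (fun m => INR (S m)) ((b - x) / 4)
    (Nat.max N1 N2)) as [l Hl]; [lra | | | | exists l; exact Hl].
  - intro; apply psi_majorant_nonneg; auto.
  - intro; apply pos_INR.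
  - intros m Hm. apply psi_majorant_ratio; auto; [|apply HN1; lia].
    assert (INR N2 <= INR (S m)) by (apply le_INR; lia). lra.
Qed.

(** * Termwise differentiation *)

Lemma sum_f_R0_diff_bound (f A : nat -> R) n m : (n <= m)%nat ->
  (forall k, Rabs (f k) <= A k) ->
  Rabs (sum_f_R0 f m - sum_f_R0 f n) <= sum_f_R0 A m - sum_f_R0 A n.
Proof.
  intros H HA. induction H as [|m H IH].
  - rewrite !Rminus_diag, Rabs_R0. lra.
  - rewrite !tech5.
    replace (sum_f_R0 f m + f (S m) - sum_f_R0 f n)
      with ((sum_f_R0 f m - sum_f_R0 f n) + f (S m)) by ring.
    eapply Rle_trans; [apply Rabs_triang|]. specialize (HA (S m)). lra.
Qed.

Lemma series_cv_dominated (f A : nat -> R) : (forall n, Rabs (f n) <= A n) ->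
  (exists l, Un_cv (fun N => sum_f_R0 A N) l) -> exists l, Un_cv (fun N => sum_f_R0 f N) l.
Proof.
  intros H [l Hl].
  destruct (Rseries_CV_comp (fun n => Rabs (f n)) A) as [la Hla].
  - intro n; split; [apply Rabs_pos | apply H].
  - exists l; exact Hl.
  - destruct (cv_cauchy_2 f (cauchy_abs f (cv_cauchy_1 _ (exist _ la Hla)))) as [lf Hlf].
    exists lf; exact Hlf.
Qed.

Lemma choose_limits (P : R -> Prop) (s : R -> nat -> R) :
  (forall y, P y -> exists l, Un_cv (s y) l) ->
  exists g : R -> R, forall y, P y -> Un_cv (s y) (g y).
Proof.
  intros H.
  assert (Hex : forall y, exists l, P y -> Un_cv (s y) l).
  { intro y. destruct (classic (P y)) as [Hy|Hy].
    - destruct (H y Hy) as [l Hl]. exists l; auto.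
    - exists 0; intro; contradiction. }
  exists (fun y => proj1_sig (constructive_indefinite_description _ (Hex y))).
  intros y Hy. destruct (constructive_indefinite_description _ (Hex y)) as [l Hl]. auto.
Qed.

Lemma weierstrass_M_test (f : nat -> R -> R) (A : nat -> R) (c : R) (d : posreal) :
  (forall n y, Boule c d y -> Rabs (f n y) <= A n) -> (forall n, 0 <= A n) ->
  (exists l, Un_cv (fun N => sum_f_R0 A N) l) ->
  exists g, CVU (fun N y => sum_f_R0 (fun k => f k y) N) g c d /\
            forall y, Boule c d y -> Un_cv (fun N => sum_f_R0 (fun k => f k y) N) (g y).
Proof.
  intros Hb HA HlA.
  destruct (choose_limits (Boule c d) (fun y N => sum_f_R0 (fun k => f k y) N)) as [g Hg].
  { intros y Hy. apply (series_cv_dominated (fun k => f k y) A); auto. }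
  exists g. split; [|exact Hg].
  destruct HlA as [lA HlA]. intros eps Heps.
  assert (Hgr : Un_growing (fun N => sum_f_R0 A N)) by (intro n; simpl; specialize (HA (S n)); lra).
  destruct (HlA (eps / 2) ltac:(lra)) as [N HN].
  exists N. intros n y Hn Hy.
  destruct (Hg y Hy (eps / 2) ltac:(lra)) as [N2 HN2].
  set (m := Nat.max n N2). set (S := fun M => sum_f_R0 (fun k => f k y) M).
  assert (H1 := HN2 m ltac:(unfold m; lia)). unfold R_dist in H1. fold (S m) in H1.
  assert (H2 := sum_f_R0_diff_bound (fun k => f k y) A n m ltac:(unfold m; lia)
    (fun k => Hb k y Hy)). fold (S m) (S n) in H2.
  assert (H3 := HN n Hn). unfold R_dist in H3.
  assert (H4 := growing_ineq _ _ Hgr HlA m).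
  rewrite Rabs_minus_sym in H1. apply Rabs_def2 in H3.
  fold (S n). replace (g y - S n) with ((g y - S m) + (S m - S n)) by ring.
  eapply Rle_lt_trans; [apply Rabs_triang | lra].
Qed.

Definition psi_series_identity (Psi : nat -> R -> R) (x : R) (r : nat) : Prop :=
  forall a, 0 < a -> x < a ->
    Un_cv (fun N => sum_f_R0 (psi_term r x a) N) (Psi r a - Psi r (a - x)).

(* Near [a] the summands are dominated uniformly by the majorant at a fixed [b] with
   [max 0 x < b < a], so the differentiated series converges uniformly. *)
Lemma psi_series_identity_S (Psi : nat -> R -> R) x r :
  (forall (r : nat) z, 0 < z -> derivable_pt_lim (Psi r) z (Psi (S r) z)) ->
  psi_series_identity Psi x r -> psi_series_identity Psi x (S r).
Proof.
  intros HPsi IH a Ha Hxa.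
  set (b := (Rmax 0 x + a) / 2).
  assert (Hlo : 0 <= Rmax 0 x /\ x <= Rmax 0 x /\ Rmax 0 x < a)
    by (split; [apply Rmax_l | split; [apply Rmax_r | apply Rmax_lub_lt; auto]]).
  assert (Hd : 0 < a - b) by (unfold b; lra).
  set (d := mkposreal _ Hd).
  assert (HD : forall y, Boule a d y -> 0 < b <= y /\ x < y).
  { intros y Hy. unfold Boule in Hy. simpl in Hy. apply Rabs_def2 in Hy. unfold b in *. lra. }
  destruct (weierstrass_M_test (fun k y => psi_term (S r) x y k) (psi_majorant (S r) x b) a d)
    as [g' [Hcvu Hg']].
  - intros n y Hy. destruct (HD y Hy). apply psi_term_bound. lra.
  - intro; apply psi_majorant_nonneg. unfold b; lra.
  - apply psi_majorant_summable; unfold b; lra.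
  - assert (Hder : derivable_pt_lim (fun y => Psi r y - Psi r (y - x)) a (g' a)).
    { apply (CVU_derivable (fun N y => sum_f_R0 (psi_term r x y) N)
        (fun N y => sum_f_R0 (fun k => psi_term (S r) x y k) N) _ g' a d Hcvu).
      - intros y Hy. destruct (HD y Hy). apply IH; lra.
      - intros n y Hy. destruct (HD y Hy).
        apply (derivable_pt_lim_sum (fun k y => psi_term r x y k)).
        intros k _. apply psi_term_deriv; lra.
      - apply Boule_center. }
    assert (Hder' : derivable_pt_lim (fun y => Psi r y - Psi r (y - x)) a
        (Psi (S r) a - Psi (S r) (a - x))).
    { apply derivable_pt_lim_minus'; [apply HPsi; auto|].
      apply (derivable_pt_lim_value _ _ (Psi (S r) (a - x) * 1)); [ring|].
      apply (derivable_pt_lim_comp' (fun y => y + - x) (Psi r)).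
      + apply derivable_pt_lim_shift.
      + apply HPsi. lra. }
    rewrite <- (uniqueness_limite _ a _ _ Hder Hder').
    apply Hg', Boule_center.
Qed.

(** * The digamma function as a limit *)

Lemma Un_cv_const c : Un_cv (fun _ => c) c.
Proof. intros eps He. exists 0%nat. intros. unfold R_dist. rewrite Rminus_diag, Rabs_R0. lra. Qed.

Lemma Un_cv_shift (u : nat -> R) l : Un_cv u l -> Un_cv (fun n => u (S n)) l.
Proof. intros H eps He. destruct (H eps He) as [N HN]. exists N. intros n Hn. apply HN; lia. Qed.

Lemma Un_cv_unshift (u : nat -> R) l : Un_cv (fun n => u (S n)) l -> Un_cv u l.
Proof.
  intros H eps He. destruct (H eps He) as [N HN]. exists (S N). intros [|n] Hn; [lia|].
  apply HN; lia.
Qed.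

Definition log_gauss (z : R) (n : nat) : R :=
  ln (INR (fact n)) + z * ln (INR n) - sum_f_R0 (fun k => ln (z + INR k)) n.

Definition digamma_approx (z : R) (n : nat) : R :=
  ln (INR n) - sum_f_R0 (fun k => / (z + INR k)) n.

Lemma gauss_seq_exp z n : 0 < z -> gauss_seq z n = exp (log_gauss z n).
Proof.
  intros Hz.
  assert (Hprod : prod_shift z n = exp (sum_f_R0 (fun k => ln (z + INR k)) n)).
  { induction n as [|n IH]; cbn [prod_shift sum_f_R0].
    - rewrite Rplus_0_r, exp_ln; auto.
    - rewrite exp_plus, <- IH, exp_ln; [reflexivity|]. pose proof (pos_INR (S n)); lra. }
  unfold gauss_seq, log_gauss, Rpower. rewrite Hprod.
  unfold Rminus. rewrite !exp_plus, exp_Ropp, exp_ln by apply INR_fact_lt_0.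
  unfold Rdiv. reflexivity.
Qed.

Lemma log_gauss_step z n : 0 < z -> (1 <= n)%nat ->
  log_gauss z (S n) - log_gauss z n = z * ln (1 + / INR n) - ln (1 + z / INR (S n)).
Proof.
  intros Hz Hn.
  assert (Hn0 : 0 < INR n) by (apply lt_0_INR; lia).
  assert (HSn : 0 < INR (S n)) by (apply lt_0_INR; lia).
  assert (E1 : ln (INR (fact (S n))) = ln (INR (S n)) + ln (INR (fact n))).
  { rewrite fact_simpl, mult_INR, ln_mult; auto. apply INR_fact_lt_0. }
  assert (E2 : ln (INR (S n)) = ln (INR n) + ln (1 + / INR n)).
  { assert (0 < / INR n) by (apply Rinv_0_lt_compat; auto).
    rewrite <- ln_mult by lra. f_equal. rewrite S_INR. field. lra. }
  assert (E3 : ln (z + INR (S n)) = ln (INR (S n)) + ln (1 + z / INR (S n))).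
  { assert (0 < z / INR (S n)) by (apply Rdiv_lt_0_compat; auto).
    rewrite <- ln_mult by lra. f_equal. field. lra. }
  unfold log_gauss. rewrite tech5, E1, E3. rewrite E2 at 2. ring.
Qed.

Lemma log_gauss_step_bounds z n : 0 < z -> (1 <= n)%nat ->
  0 <= log_gauss z (S n) - log_gauss z n <= z * (1 + z) * (/ INR n - / INR (S n)).
Proof.
  intros Hz Hn. rewrite log_gauss_step by auto.
  assert (Hn0 : 0 < INR n) by (apply lt_0_INR; lia).
  assert (HSn : INR (S n) = INR n + 1) by apply S_INR.
  assert (Hinv : 0 < / INR n) by (apply Rinv_0_lt_compat; auto).
  assert (H1 := ln_1_plus_ge (/ INR n) ltac:(lra)).
  assert (H2 := ln_1_plus_le (/ INR n) ltac:(lra)).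
  assert (Hzn : 0 <= z / INR (S n)) by (left; apply Rdiv_lt_0_compat; lra).
  assert (H3 := ln_1_plus_ge (z / INR (S n)) Hzn).
  assert (H4 := ln_1_plus_le (z / INR (S n)) ltac:(lra)).
  replace (/ INR n / (1 + / INR n)) with (/ INR (S n)) in H1 by (rewrite HSn; field; lra).
  replace (z / INR (S n) / (1 + z / INR (S n))) with (z / (INR n + 1 + z)) in H3
    by (rewrite HSn; field; lra).
  split.
  - unfold Rdiv in H4. nra.
  - assert (z * / INR n - z / (INR n + 1 + z) = z * (1 + z) / (INR n * (INR n + 1 + z)))
      by (field; lra).
    assert (z * (1 + z) / (INR n * (INR n + 1 + z)) <= z * (1 + z) * (/ INR n - / INR (S n))).
    { rewrite HSn. replace (/ INR n - / (INR n + 1)) with (/ (INR n * (INR n + 1))) by (field; lra).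
      unfold Rdiv. apply Rmult_le_compat_l; [nra|]. apply Rinv_le_contravar; nra. }
    nra.
Qed.

Lemma log_gauss_cv z : 0 < z -> exists l, Un_cv (log_gauss z) l.
Proof.
  intros Hz.
  assert (Hg : Un_growing (fun n => log_gauss z (S n))).
  { intro n. pose proof (log_gauss_step_bounds z (S n) Hz ltac:(lia)). lra. }
  assert (Hb : forall n, log_gauss z (S n) + z * (1 + z) * / INR (S n)
                         <= log_gauss z 1 + z * (1 + z)).
  { induction n as [|n IH]; [simpl; rewrite Rinv_1; lra|].
    pose proof (log_gauss_step_bounds z (S n) Hz ltac:(lia)). lra. }
  destruct (growing_cv _ Hg) as [l Hl].
  - exists (log_gauss z 1 + z * (1 + z)). intros y [n ->]. specialize (Hb n).
    assert (0 <= z * (1 + z) * / INR (S n)).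
    { apply Rmult_le_pos; [nra | left; apply Rinv_0_lt_compat, lt_0_INR; lia]. }
    lra.
  - exists l. apply Un_cv_unshift; auto.
Qed.

Lemma ln_le_harmonic m : ln (INR (S (S m))) <= sum_f_R0 (fun k => / (1 + INR k)) m.
Proof.
  induction m as [|m IH].
  - simpl. rewrite Rplus_0_r, Rinv_1. pose proof (ln_1_plus_le 1 ltac:(lra)). lra.
  - assert (Hpos : 0 < / INR (S (S m))) by (apply Rinv_0_lt_compat, lt_0_INR; lia).
    replace (ln (INR (S (S (S m))))) with (ln (INR (S (S m))) + ln (1 + / INR (S (S m)))).
    + rewrite tech5. pose proof (ln_1_plus_le (/ INR (S (S m))) ltac:(lra)).
      replace (1 + INR (S m)) with (INR (S (S m))) by (rewrite (S_INR (S m)); ring). lra.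
    + assert (0 < INR (S (S m))) by (apply lt_0_INR; lia).
      rewrite <- ln_mult by lra. f_equal. rewrite (S_INR (S (S m))). field. lra.
Qed.

Lemma digamma_approx_1_cv : exists E, Un_cv (digamma_approx 1) E.
Proof.
  assert (Hg : Un_growing (fun n => digamma_approx 1 (S n))).
  { intro n. unfold digamma_approx. rewrite (tech5 _ (S n)).
    assert (HS : 0 < INR (S n)) by (apply lt_0_INR; lia).
    assert (0 < / INR (S n)) by (apply Rinv_0_lt_compat; auto).
    replace (ln (INR (S (S n)))) with (ln (INR (S n)) + ln (1 + / INR (S n))).
    2:{ rewrite <- ln_mult by lra. f_equal. rewrite (S_INR (S n)). field. lra. }
    assert (Hln := ln_1_plus_ge (/ INR (S n)) ltac:(lra)).
    replace (/ INR (S n) / (1 + / INR (S n))) with (/ (1 + INR (S n))) in Hln by (field; lra).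
    assert (/ (1 + INR (S (S n))) <= / (1 + INR (S n))).
    { apply Rinv_le_contravar; [lra|]. rewrite (S_INR (S n)). lra. }
    lra. }
  destruct (growing_cv _ Hg) as [l Hl].
  - exists 0. intros y [n ->]. unfold digamma_approx.
    assert (H := ln_le_harmonic n).
    assert (ln (INR (S n)) <= ln (INR (S (S n)))).
    { apply Rlt_le, ln_increasing; [apply lt_0_INR; lia | apply lt_INR; lia]. }
    rewrite tech5.
    assert (0 < / (1 + INR (S n))) by (apply Rinv_0_lt_compat; pose proof (pos_INR (S n)); lra).
    lra.
  - exists l. apply Un_cv_unshift; auto.
Qed.

Lemma inv_sq_summable : exists l, Un_cv (fun N => sum_f_R0 (fun k => / (INR k + 1) ^ 2) N) l.
Proof.
  destruct (raabe_summable (fun k => / (INR k + 1) ^ 2) (fun k => INR k + 1) (1 / 2) 0)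
    as [l Hl]; [lra | | | | exists l; auto].
  - intro n. left. apply Rinv_0_lt_compat, pow_lt. pose proof (pos_INR n); lra.
  - intro n. pose proof (pos_INR n); lra.
  - intros n _. rewrite S_INR. pose proof (pos_INR n).
    replace ((INR n + 1 + 1) * / (INR n + 1 + 1) ^ 2) with (/ (INR n + 2)) by (field; lra).
    replace ((INR n + 1 - 1 / 2) * / (INR n + 1) ^ 2) with
      ((INR n + 1 / 2) / (INR n + 1) ^ 2) by (field; lra).
    apply Rmult_le_reg_r with ((INR n + 2) * (INR n + 1) ^ 2); [nra|].
    replace (/ (INR n + 2) * ((INR n + 2) * (INR n + 1) ^ 2)) with ((INR n + 1) ^ 2)
      by (field; lra).
    replace ((INR n + 1 / 2) / (INR n + 1) ^ 2 * ((INR n + 2) * (INR n + 1) ^ 2)) with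
      ((INR n + 1 / 2) * (INR n + 2)) by (field; lra).
    nra.
Qed.

Definition digamma_correction (k : nat) (y : R) : R := / (1 + INR k) - / (y + INR k).

Lemma digamma_approx_split y n :
  digamma_approx y n = digamma_approx 1 n + sum_f_R0 (fun k => digamma_correction k y) n.
Proof. unfold digamma_approx, digamma_correction. rewrite minus_sum. ring. Qed.

Lemma digamma_correction_bound k y lo hi : 0 < lo <= y -> y <= hi ->
  Rabs (digamma_correction k y) <= (hi + 1) / Rmin lo 1 * / (INR k + 1) ^ 2.
Proof.
  intros Hy Hhi. unfold digamma_correction.
  set (mu := Rmin lo 1).
  assert (Hmu0 : 0 < mu) by (unfold mu; apply Rmin_glb_lt; lra).
  assert (Hmu1 : mu <= lo) by apply Rmin_l. assert (Hmu2 : mu <= 1) by apply Rmin_r.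
  pose proof (pos_INR k).
  assert (Hyk : mu * (INR k + 1) <= y + INR k) by nra.
  replace (/ (1 + INR k) - / (y + INR k)) with ((y - 1) / ((INR k + 1) * (y + INR k)))
    by (field; lra).
  unfold Rdiv. rewrite Rabs_mult, Rabs_inv, (Rabs_pos_eq ((INR k + 1) * (y + INR k))) by nra.
  replace ((hi + 1) * / mu * / (INR k + 1) ^ 2)
    with ((hi + 1) * / (mu * (INR k + 1) * (INR k + 1))) by (field; lra).
  apply Rmult_le_compat; [apply Rabs_pos | left; apply Rinv_0_lt_compat; nra | |].
  - apply Rabs_le; lra.
  - apply Rinv_le_contravar; nra.
Qed.

Lemma log_gauss_deriv n z : 0 < z ->
  derivable_pt_lim (fun y => log_gauss y n) z (digamma_approx z n).
Proof.
  intros Hz. unfold log_gauss, digamma_approx.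
  apply (derivable_pt_lim_value _ _
    (0 + 1 * ln (INR n) - sum_f_R0 (fun k => / (z + INR k) * 1) n)).
  { rewrite (sum_eq _ (fun k => / (z + INR k))) by (intros; ring). ring. }
  apply derivable_pt_lim_minus'; [apply derivable_pt_lim_plus'|].
  - apply derivable_pt_lim_const.
  - apply (derivable_pt_lim_ext (fun y => ln (INR n) * y)); [intro; ring|].
    apply (derivable_pt_lim_value _ _ (ln (INR n) * 1)); [ring|].
    apply derivable_pt_lim_scal', derivable_pt_lim_id.
  - apply (derivable_pt_lim_sum (fun k y => ln (y + INR k))). intros k _.
    apply (derivable_pt_lim_comp' (fun y => y + INR k) ln); [apply derivable_pt_lim_shift|].
    apply derivable_pt_lim_ln. pose proof (pos_INR k); lra.
Qed.

Lemma digamma_approx_cvu z0 : 0 < z0 -> exists (d : posreal) (h : R -> R),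
  CVU (fun n y => digamma_approx y n) h z0 d /\
  (forall y, Boule z0 d y -> Un_cv (digamma_approx y) (h y)) /\
  (forall y, Boule z0 d y -> 0 < y).
Proof.
  intros Hz0.
  assert (Hdp : 0 < z0 / 2) by lra. set (d := mkposreal _ Hdp).
  assert (HD : forall y, Boule z0 d y -> z0 / 2 <= y <= 3 * z0 / 2).
  { intros y Hy. unfold Boule in Hy; simpl in Hy. apply Rabs_def2 in Hy. lra. }
  set (C := (3 * z0 / 2 + 1) / Rmin (z0 / 2) 1).
  assert (HC : 0 <= C) by (apply Rle_mult_inv_pos; [lra | apply Rmin_glb_lt; lra]).
  destruct digamma_approx_1_cv as [E HE].
  destruct (weierstrass_M_test digamma_correction (fun k => C * / (INR k + 1) ^ 2) z0 d)
    as [U [HUu HU]].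
  - intros n y Hy. destruct (HD y Hy). apply digamma_correction_bound; lra.
  - intro n. apply Rmult_le_pos; auto.
    left; apply Rinv_0_lt_compat, pow_lt. pose proof (pos_INR n); lra.
  - destruct inv_sq_summable as [l Hl]. exists (C * l).
    apply (Un_cv_ext (fun N => C * sum_f_R0 (fun k => / (INR k + 1) ^ 2) N));
      [intro; apply sum_f_R0_scal_l|].
    apply CV_mult; [apply Un_cv_const | exact Hl].
  - exists d, (fun y => E + U y). split; [|split].
    + intros eps Heps.
      destruct (HE (eps / 2) ltac:(lra)) as [N1 HN1].
      destruct (HUu (eps / 2) ltac:(lra)) as [N2 HN2].
      exists (Nat.max N1 N2). intros n y Hn Hy.
      rewrite digamma_approx_split.
      assert (H1 := HN1 n ltac:(lia)). unfold R_dist in H1.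
      assert (H2 := HN2 n y ltac:(lia) Hy).
      replace (E + U y - (digamma_approx 1 n + sum_f_R0 (fun k => digamma_correction k y) n))
        with ((U y - sum_f_R0 (fun k => digamma_correction k y) n) + - (digamma_approx 1 n - E))
        by ring.
      eapply Rle_lt_trans; [apply Rabs_triang|]. rewrite Rabs_Ropp. lra.
    + intros y Hy. apply (Un_cv_ext (fun n =>
        digamma_approx 1 n + sum_f_R0 (fun k => digamma_correction k y) n));
        [intro; symmetry; apply digamma_approx_split|].
      apply CV_plus; auto.
    + intros y Hy. destruct (HD y Hy). lra.
Qed.

Lemma log_gauss_limit_deriv (L : R -> R) z0 :
  (forall y, 0 < y -> Un_cv (log_gauss y) (L y)) -> 0 < z0 ->
  exists psi, Un_cv (digamma_approx z0) psi /\ derivable_pt_lim L z0 psi.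
Proof.
  intros HL Hz0. destruct (digamma_approx_cvu z0 Hz0) as [d [h [Hcvu [Hh Hpos]]]].
  exists (h z0). split; [apply Hh, Boule_center|].
  apply (CVU_derivable (fun n y => log_gauss y n) (fun n y => digamma_approx y n) L h z0 d Hcvu).
  - intros y Hy. apply HL, Hpos, Hy.
  - intros n y Hy. apply log_gauss_deriv, Hpos, Hy.
  - apply Boule_center.
Qed.

(* [G = exp o L] with [L] the limit of [log_gauss], and [L'] is the limit of [digamma_approx]. *)
Lemma digamma_limit (G : R -> R) (Psi : nat -> R -> R) :
  (forall z, 0 < z -> Un_cv (gauss_seq z) (G z)) ->
  (forall z, 0 < z -> derivable_pt_lim G z (Psi 0%nat z * G z)) ->
  forall z0, 0 < z0 -> Un_cv (digamma_approx z0) (Psi 0%nat z0).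
Proof.
  intros HG HdG z0 Hz0.
  destruct (choose_limits (fun y => 0 < y) log_gauss log_gauss_cv) as [L HL].
  assert (HGL : forall y, 0 < y -> G y = exp (L y)).
  { intros y Hy. apply (UL_sequence (gauss_seq y)); [apply HG; auto|].
    apply (Un_cv_ext (fun n => exp (log_gauss y n))); [intro; rewrite gauss_seq_exp; auto|].
    apply (continuity_seq exp); [|apply HL; auto].
    apply derivable_continuous_pt. exists (exp (L y)). apply derivable_pt_lim_exp. }
  destruct (log_gauss_limit_deriv L z0 HL Hz0) as [psi [Hpsi HdL]].
  assert (HdG' : derivable_pt_lim G z0 (exp (L z0) * psi)).
  { apply (derivable_pt_lim_local (fun y => exp (L y)) G z0 _ z0 Hz0).
    - intros y Hy. apply Rabs_def2 in Hy. symmetry. apply HGL. lra.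
    - apply (derivable_pt_lim_comp' L exp); [auto | apply derivable_pt_lim_exp]. }
  assert (Heq := uniqueness_limite G z0 _ _ (HdG z0 Hz0) HdG').
  rewrite HGL in Heq by auto.
  replace (Psi 0%nat z0) with psi; [exact Hpsi|].
  apply (Rmult_eq_reg_l (exp (L z0))); [lra | apply exp_neq_0].
Qed.

(** * The case [r = 0] *)

Lemma poch_shift_1 a n : a * poch (a + 1) n = poch a (S n).
Proof.
  induction n as [|n IH]; [simpl; ring|].
  rewrite (poch_S (a + 1) n), (poch_S a (S n)), <- IH, S_INR. ring.
Qed.

Lemma psi_term_0_step x b m : 0 < b ->
  psi_term 0 x b m - psi_term 0 x (b + 1) m = poch x (S m) / poch b (S (S m)).
Proof.
  intros Hb. rewrite !psi_term_0.
  replace (poch (b + 1) (S m)) with (poch b (S (S m)) / b)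
    by (rewrite <- (poch_shift_1 b (S m)); field; lra).
  rewrite (poch_S b (S m)).
  assert (0 < poch b (S m)) by (apply poch_pos; auto).
  assert (0 < INR (S m)) by (apply lt_0_INR; lia).
  field. repeat split; lra.
Qed.

Lemma poch_ratio_telescope x b N : 0 < b -> x < b ->
  sum_f_R0 (fun m => poch x (S m) / poch b (S (S m))) N =
  (x / b - poch x (S (S N)) / poch b (S (S N))) / (b - x).
Proof.
  intros Hb Hx.
  assert (Ht : forall n, poch x n / poch b (S n) =
     (poch x n / poch b n - poch x (S n) / poch b (S n)) / (b - x)).
  { intro n. rewrite (poch_S x n), (poch_S b n).
    assert (0 < poch b n) by (apply poch_pos; auto). pose proof (pos_INR n).
    field. repeat split; lra. }
  induction N as [|N IH].
  - unfold sum_f_R0. rewrite (Ht 1%nat). simpl poch. field. split; lra.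
  - rewrite tech5, IH, (Ht (S (S N))).
    assert (0 < poch b (S (S N))) by (apply poch_pos; auto).
    assert (0 < poch b (S (S (S N)))) by (apply poch_pos; auto).
    field. repeat split; lra.
Qed.

(* [|(x)_n/(a)_n|] decays like [exp(-(a-x) H_n(a))], i.e. like [n^(x-a)]. *)
Lemma poch_ratio_decay x a N0 k : 0 < a -> x < a -> Rabs x <= INR N0 ->
  Rabs (poch x (N0 + k) / poch a (N0 + k)) *
    (1 + (a - x) * (Hsum (N0 + k) 1 a - Hsum N0 1 a))
  <= Rabs (poch x N0 / poch a N0).
Proof.
  intros Ha Hx HN0. set (p := fun n => Rabs (poch x n / poch a n)). fold (p (N0 + k)%nat) (p N0).
  induction k as [|k IH].
  - rewrite Nat.add_0_r, Rminus_diag, Rmult_0_r, Rplus_0_r, Rmult_1_r. lra.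
  - replace (N0 + S k)%nat with (S (N0 + k)) by lia.
    set (n := (N0 + k)%nat) in *.
    assert (Hn : INR N0 <= INR n) by (apply le_INR; unfold n; lia).
    assert (Habs := Rle_abs (- x)). rewrite Rabs_Ropp in Habs.
    assert (Hpa : 0 < poch a n) by (apply poch_pos; auto).
    pose proof (pos_INR n).
    set (t := (a - x) / (a + INR n)).
    assert (Ht0 : 0 <= t) by (apply Rle_mult_inv_pos; lra).
    assert (Ht1 : t <= 1) by (apply (Rmult_le_reg_r (a + INR n)); [lra|];
      unfold t, Rdiv; rewrite Rmult_assoc, Rinv_l; lra).
    assert (Ep : p (S n) = p n * (1 - t)).
    { unfold p, t. rewrite (poch_S x n), (poch_S a n).
      replace (poch x n * (x + INR n) / (poch a n * (a + INR n))) with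
        (poch x n / poch a n * (1 - (a - x) / (a + INR n))) by (field; lra).
      rewrite Rabs_mult, (Rabs_pos_eq (1 - _)); [reflexivity|]. fold t. lra. }
    set (Sn := 1 + (a - x) * (Hsum n 1 a - Hsum N0 1 a)).
    assert (HS1 : 1 <= Sn).
    { assert (Hsum N0 1 a <= Hsum n 1 a) by (apply Hsum_le; auto; unfold n; lia).
      unfold Sn. nra. }
    replace (1 + (a - x) * (Hsum (S n) 1 a - Hsum N0 1 a)) with (Sn + t)
      by (unfold Sn, t; rewrite Hsum_S, pow_1, (Rplus_comm (INR n)); field; lra).
    rewrite Ep.
    assert (0 <= p n) by apply Rabs_pos.
    assert ((1 - t) * (Sn + t) <= Sn) by nra.
    eapply Rle_trans; [|exact IH].
    rewrite Rmult_assoc. apply Rmult_le_compat_l; auto.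
Qed.

Lemma poch_ratio_cv0 x a : 0 < a -> x < a -> Un_cv (fun n => poch x n / poch a n) 0.
Proof.
  intros Ha Hx eps Heps.
  destruct (INR_unbounded (Rabs x)) as [N0 HN0].
  set (p := fun n => Rabs (poch x n / poch a n)).
  assert (Hd : 0 < a - x) by lra.
  destruct (Hsum_unbounded a (Hsum N0 1 a + p N0 / (eps * (a - x))) Ha) as [N1 HN1].
  exists (Nat.max N0 N1). intros n Hn. unfold R_dist. rewrite Rminus_0_r. fold (p n).
  assert (Hkey := poch_ratio_decay x a N0 (n - N0) Ha Hx ltac:(lra)).
  replace (N0 + (n - N0))%nat with n in Hkey by lia. fold (p n) (p N0) in Hkey.
  specialize (HN1 n ltac:(lia)).
  assert (0 <= p n) by apply Rabs_pos.
  assert (0 <= p N0) by apply Rabs_pos.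
  assert (0 <= p N0 / eps) by (apply Rle_mult_inv_pos; auto).
  assert (p N0 / eps <= (a - x) * (Hsum n 1 a - Hsum N0 1 a)).
  { apply (Rmult_le_reg_r (/ (a - x))); [apply Rinv_0_lt_compat; lra|].
    replace (p N0 / eps * / (a - x)) with (p N0 / (eps * (a - x))) by (field; lra).
    replace ((a - x) * (Hsum n 1 a - Hsum N0 1 a) * / (a - x))
      with (Hsum n 1 a - Hsum N0 1 a) by (field; lra).
    lra. }
  destruct (Rlt_or_le (p n) eps) as [Hlt|Hge]; auto.
  assert (p n * (1 + p N0 / eps) <= p N0) by nra.
  apply (Rmult_lt_reg_r (1 + p N0 / eps)); [lra|].
  replace (eps * (1 + p N0 / eps)) with (eps + p N0) by (field; lra). lra.
Qed.

Lemma poch_shift_le a c m : 0 < a -> 0 <= c ->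
  (a + c) * poch a (S m) <= a * poch (a + c) (S m).
Proof.
  intros Ha Hc. induction m as [|m IH]; [simpl; lra|].
  rewrite (poch_S a (S m)), (poch_S (a + c) (S m)).
  assert (0 < poch a (S m)) by (apply poch_pos; auto).
  pose proof (pos_INR (S m)).
  replace ((a + c) * (poch a (S m) * (a + INR (S m))))
    with (((a + c) * poch a (S m)) * (a + INR (S m))) by ring.
  replace (a * (poch (a + c) (S m) * (a + c + INR (S m))))
    with ((a * poch (a + c) (S m)) * (a + c + INR (S m))) by ring.
  apply Rmult_le_compat; nra.
Qed.

Lemma psi_series_0_shift_bound x a c LA N : 0 < a -> x < a -> 0 <= c ->
  Un_cv (fun N => sum_f_R0 (psi_majorant 0 x a) N) LA ->
  Rabs (sum_f_R0 (psi_term 0 x (a + c)) N) <= a / (a + c) * LA.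
Proof.
  intros Ha Hx Hc HLA.
  eapply Rle_trans; [apply Rsum_abs|].
  assert (Hgr : Un_growing (fun N => sum_f_R0 (psi_majorant 0 x a) N)).
  { intro n. simpl. pose proof (psi_majorant_nonneg 0 x a (S n) Ha). lra. }
  assert (0 <= a / (a + c)) by (apply Rle_mult_inv_pos; lra).
  eapply Rle_trans; [|apply Rmult_le_compat_l; [auto | exact (growing_ineq _ _ Hgr HLA N)]].
  rewrite sum_f_R0_scal_l. apply sum_Rle. intros m _.
  rewrite psi_term_0. unfold psi_majorant. rewrite bell_rec_0, pow_O.
  assert (0 < poch a (S m)) by (apply poch_pos; auto).
  assert (0 < poch (a + c) (S m)) by (apply poch_pos; lra).
  assert (0 < INR (S m)) by (apply lt_0_INR; lia).
  assert (Hpb := poch_shift_le a c m Ha Hc).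
  unfold Rdiv. rewrite !Rabs_mult, Rabs_inv, (Rabs_pos_eq (INR (S m))) by lra.
  rewrite Rabs_inv, (Rabs_pos_eq (poch (a + c) (S m))) by lra.
  assert (0 <= Rabs (poch x (S m))) by apply Rabs_pos.
  assert (/ poch (a + c) (S m) <= a * / (a + c) * / poch a (S m)).
  { apply (Rmult_le_reg_r (poch (a + c) (S m) * ((a + c) * poch a (S m))));
      [apply Rmult_lt_0_compat; [|apply Rmult_lt_0_compat]; lra|].
    replace (/ poch (a + c) (S m) * (poch (a + c) (S m) * ((a + c) * poch a (S m))))
      with ((a + c) * poch a (S m)) by (field; lra).
    replace (a * / (a + c) * / poch a (S m) * (poch (a + c) (S m) * ((a + c) * poch a (S m))))
      with (a * poch (a + c) (S m)) by (field; lra).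
    lra. }
  assert (0 < / INR (S m)) by (apply Rinv_0_lt_compat; lra).
  replace (a * / (a + c) * (/ INR (S m) * (Rabs (poch x (S m)) * / poch a (S m)) * (1 * 1)))
    with (/ INR (S m) * Rabs (poch x (S m)) * (a * / (a + c) * / poch a (S m))) by ring.
  rewrite <- Rmult_assoc. apply Rmult_le_compat_l; [apply Rmult_le_pos|]; lra.
Qed.

Lemma Un_cv_of_approximations (v s e : nat -> R) (w : nat -> nat -> R) l :
  (forall K, Un_cv (fun N => v N - w K N) (s K)) -> Un_cv s l ->
  (forall K N, Rabs (w K N) <= e K) -> Un_cv e 0 -> Un_cv v l.
Proof.
  intros Hvw Hs Hw He eps Heps.
  destruct (Hs (eps / 3) ltac:(lra)) as [K1 HK1].
  destruct (He (eps / 3) ltac:(lra)) as [K2 HK2].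
  set (K := Nat.max K1 K2).
  destruct (Hvw K (eps / 3) ltac:(lra)) as [N0 HN0].
  exists N0. intros N HN. unfold R_dist in *.
  assert (H1 := HN0 N HN). assert (H2 := HK1 K ltac:(unfold K; lia)).
  assert (H3 := HK2 K ltac:(unfold K; lia)). rewrite Rminus_0_r in H3.
  assert (H4 := Hw K N). assert (H5 := Rle_abs (e K)).
  replace (v N - l) with ((v N - w K N - s K) + (s K - l) + w K N) by ring.
  eapply Rle_lt_trans; [apply Rabs_triang|].
  eapply Rle_lt_trans; [apply Rplus_le_compat_r, Rabs_triang|]. lra.
Qed.

Definition digamma_diff_term (x a : R) (k : nat) : R := / (a - x + INR k) - / (a + INR k).

(* Shifting [b] by one turns the summands into a telescoping series. *)
Lemma psi_series_0_step_cv x b : 0 < b -> x < b ->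
  Un_cv (fun N => sum_f_R0 (psi_term 0 x b) N - sum_f_R0 (psi_term 0 x (b + 1)) N)
        (/ (b - x) - / b).
Proof.
  intros Hb Hbx.
  apply (Un_cv_ext (fun N => (x / b - poch x (S (S N)) / poch b (S (S N))) / (b - x))).
  - intro N. rewrite <- minus_sum, <- poch_ratio_telescope by auto.
    apply sum_eq; intros m _. symmetry. apply psi_term_0_step; auto.
  - apply (Un_cv_ext (fun N => (x / b - poch x (S (S N)) / poch b (S (S N))) * / (b - x)));
      [reflexivity|].
    replace (/ (b - x) - / b) with ((x / b - 0) * / (b - x)) by (field; lra).
    apply CV_mult; [apply CV_minus|]; [apply Un_cv_const | | apply Un_cv_const].
    apply (Un_cv_shift (fun n => poch x (S n) / poch b (S n))).
    apply (Un_cv_shift (fun n => poch x n / poch b n)). apply poch_ratio_cv0; auto.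
Qed.

Lemma psi_series_0_shifts_cv x a K : 0 < a -> x < a ->
  Un_cv (fun N => sum_f_R0 (psi_term 0 x a) N - sum_f_R0 (psi_term 0 x (a + INR (S K))) N)
        (sum_f_R0 (digamma_diff_term x a) K).
Proof.
  intros Ha Hxa.
  assert (Hstep : forall j, Un_cv (fun N => sum_f_R0 (psi_term 0 x (a + INR j)) N
      - sum_f_R0 (psi_term 0 x (a + INR j + 1)) N) (digamma_diff_term x a j)).
  { intro j. pose proof (pos_INR j). unfold digamma_diff_term.
    replace (a - x + INR j) with (a + INR j - x) by ring.
    apply psi_series_0_step_cv; lra. }
  induction K as [|K IH].
  - apply (Un_cv_ext (fun N => sum_f_R0 (psi_term 0 x (a + INR 0)) N
      - sum_f_R0 (psi_term 0 x (a + INR 0 + 1)) N)); [|apply Hstep].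
    intro N. simpl INR. rewrite Rplus_0_r. reflexivity.
  - rewrite tech5. apply (Un_cv_ext (fun N =>
      (sum_f_R0 (psi_term 0 x a) N - sum_f_R0 (psi_term 0 x (a + INR (S K))) N) +
      (sum_f_R0 (psi_term 0 x (a + INR (S K))) N
       - sum_f_R0 (psi_term 0 x (a + INR (S K) + 1)) N))); [|apply CV_plus; auto].
    intro N. replace (a + INR (S (S K))) with (a + INR (S K) + 1)
      by (rewrite (S_INR (S K)); ring). ring.
Qed.

Lemma Un_cv_ratio_shift c L : 0 < c -> Un_cv (fun K => c / (c + INR (S K)) * L) 0.
Proof.
  intros Hc eps Heps.
  destruct (INR_unbounded (c * Rabs L / eps)) as [K0 HK0].
  exists K0. intros K HK. unfold R_dist. rewrite Rminus_0_r.
  assert (INR K0 <= INR (S K)) by (apply le_INR; lia).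
  assert (0 < c + INR (S K)) by (pose proof (pos_INR (S K)); lra).
  unfold Rdiv. rewrite !Rabs_mult, Rabs_inv, !Rabs_pos_eq by lra.
  apply (Rmult_lt_reg_r ((c + INR (S K)) / eps)); [apply Rdiv_lt_0_compat; lra|].
  replace (c * / (c + INR (S K)) * Rabs L * ((c + INR (S K)) / eps))
    with (c * Rabs L / eps) by (field; lra).
  replace (eps * ((c + INR (S K)) / eps)) with (c + INR (S K)) by (field; lra).
  lra.
Qed.

(* The series at [a + K + 1] is [O(1/K)] uniformly in the truncation, and the differences
   with the series at [a] are the partial sums of [psi(a) - psi(a-x)]. *)
Lemma psi_series_identity_0 (G : R -> R) (Psi : nat -> R -> R) x :
  (forall z, 0 < z -> Un_cv (gauss_seq z) (G z)) ->
  (forall z, 0 < z -> derivable_pt_lim G z (Psi 0%nat z * G z)) ->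
  psi_series_identity Psi x 0.
Proof.
  intros HG HdG a Ha Hxa.
  destruct (psi_majorant_summable 0 x a Ha Hxa) as [LA HLA].
  apply (Un_cv_of_approximations _ (sum_f_R0 (digamma_diff_term x a))
    (fun K => a / (a + INR (S K)) * LA)
    (fun K N => sum_f_R0 (psi_term 0 x (a + INR (S K))) N)).
  - intro K. apply psi_series_0_shifts_cv; auto.
  - apply (Un_cv_ext (fun n => digamma_approx a n - digamma_approx (a - x) n)).
    + intro n. unfold digamma_approx, digamma_diff_term. rewrite minus_sum. ring.
    + apply CV_minus; apply (digamma_limit G Psi HG HdG); lra.
  - intros K N. apply psi_series_0_shift_bound; auto. apply pos_INR.
  - apply Un_cv_ratio_shift; auto.
Qed.

Theorem mainTheorem13 :
  forall (G : R -> R) (Psi : nat -> R -> R),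
    (forall z, 0 < z -> Un_cv (gauss_seq z) (G z)) ->
    (forall z, 0 < z -> derivable_pt_lim G z (Psi 0%nat z * G z)) ->
    (forall (r : nat) z, 0 < z -> derivable_pt_lim (Psi r) z (Psi (S r) z)) ->
    forall (a x : R), 0 < a -> x < a ->
    forall r : nat,
      infinite_sum
        (fun m : nat =>
           let n := S m in
           / INR n * (poch x n / poch a n) *
           bellY r (fun j => (-1) ^ j * INR (fact (j - 1)) * Hsum n j a))
        (- (Psi r (a - x) - Psi r a)).
Proof.
  intros G Psi HG HdG HPsi a x Ha Hxa r.
  assert (Hid : psi_series_identity Psi x r).
  { induction r as [|r IH].
    - apply (psi_series_identity_0 G); auto.
    - apply psi_series_identity_S; auto. }
  replace (- (Psi r (a - x) - Psi r a)) with (Psi r a - Psi r (a - x)) by ring.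
  exact (Hid a Ha Hxa).
Qed.
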